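(* Let $R$ be a von Neumann regular semiartinian ring with primitive factors artinian, with socle sequence $(S_\alpha\mid\alpha\le\sigma+1)$ and dimension sequence $\{(\lambda_\alpha,\{(n_{\alpha\beta},K_{\alpha\beta})\mid\beta<\lambda_\alpha\})\mid\alpha\le\sigma\}$. Then for each $\alpha\le\sigma$ the following are equivalent: (i) $R/S_\alpha$ is commutative; (ii) for each $\beta<\lambda_\alpha$, $K_{\alpha\beta}$ is commutative and $n_{\alpha\beta}=1$; (iii) for each $\beta<\lambda_\alpha$, $K_{\alpha\beta}$ is commutative, and $R/S_\alpha$ is isomorphic to a subring $\bar R_\alpha$ of the ring direct product $\prod_{\beta<\lambda_\alpha}K_{\alpha\beta}$ such that $\mathrm{Soc}(\bar R_\alpha)=\bigoplus_{\beta<\lambda_\alpha}K_{\alpha\beta}$.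
   Context: Socle sequence of $R$: $S_0=0$, $S_{\alpha+1}/S_\alpha=\mathrm{Soc}(R/S_\alpha)$, unions at limit ordinals; $R$ semiartinian means $S_{\sigma+1}=R$ for some $\sigma$ (Loewy length $\sigma+1$). $R$ has primitive factors artinian if $R/P$ is artinian for every primitive ideal $P$. For such $R$ (regular, semiartinian, primitive factors artinian) it is known that for each $\alpha\le\sigma$ the layer $L_\alpha=S_{\alpha+1}/S_\alpha$ is isomorphic, as a ring without unit, to $\bigoplus_{\beta<\lambda_\alpha}M_{n_{\alpha\beta}}(K_{\alpha\beta})$, where $\lambda_\alpha>0$ is the number of homogeneous components of $L_\alpha$ (infinite for $\alpha<\sigma$, finite for $\alpha=\sigma$), each $n_{\alpha\beta}$ is a positive integer, and each $K_{\alpha\beta}$ is a skew-field; the summand $M_{n_{\alpha\beta}}(K_{\alpha\beta})$ corresponds to the $\beta$-th homogeneous component $H_{\alpha\beta}\cong P_{\alpha\beta}^{n_{\alpha\beta}}$ of $L_\alpha$ with $P_{\alpha\beta}$ a simple projective $R/S_\alpha$-module and $K_{\alpha\beta}\cong\mathrm{End}(P_{\alpha\beta})$. The family $\{(\lambda_\alpha,\{(n_{\alpha\beta},K_{\alpha\beta})\mid\beta<\lambda_\alpha\})\mid\alpha\le\sigma\}$ is the dimension sequence of $R$. *)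

From Stdlib Require List.
From HB Require Import structures.
From mathcomp Require Import all_boot all_algebra.
Set Implicit Arguments. Unset Strict Implicit. Unset Printing Implicit Defensive.
Import GRing.Theory.
Local Open Scope ring_scope.

Section Defs.
Variable R : nzRingType.

Definition subR (A B : R -> Prop) := forall x, A x -> B x.
Definition eqR (A B : R -> Prop) := forall x, A x <-> B x.

Definition right_ideal (A : R -> Prop) :=
  [/\ A 0, (forall x y, A x -> A y -> A (x - y)) & (forall x r, A x -> A (x * r))].

Definition vN_regular := forall a : R, exists x, a * x * a = a.

(* M/I is a simple (right) submodule of R/I, i.e. a minimal right ideal of R/I
   (right ideals of R/I <-> right ideals of R containing I) *)
Definition minimal_over (I M : R -> Prop) :=
  [/\ right_ideal M, subR I M, (exists m, M m /\ ~ I m) &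
      forall N, right_ideal N -> subR I N -> subR N M ->
        (exists n, N n /\ ~ I n) -> subR M N].

(* f induces a right R-module homomorphism A/I -> B/I *)
Definition hom_over (I A B : R -> Prop) (f : R -> R) :=
  [/\ (forall x, A x -> B (f x)),
      (forall x, A x -> I x -> I (f x)),
      (forall x y, A x -> A y -> I (f (x + y) - (f x + f y))) &
      (forall x r, A x -> I (f (x * r) - f x * r))].

(* A/I and B/I are isomorphic right R-modules *)
Definition iso_over (I A B : R -> Prop) :=
  exists f, [/\ hom_over I A B f,
               (forall x, A x -> I (f x) -> I x) &
               (forall y, B y -> exists x, A x /\ I (f x - y))].

(* End(M/I) is commutative *)
Definition endo_comm (I M : R -> Prop) :=
  forall f g, hom_over I M M f -> hom_over I M M g ->
    forall x, M x -> I (f (g x) - g (f x)).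

(* Soc(R/I) (pulled back to R): sums of elements of minimal right ideals of R/I *)
Definition soc_over (I : R -> Prop) (x : R) :=
  exists s : seq R, (forall y, y \in s -> exists N, minimal_over I N /\ N y)
                    /\ I (x - \sum_(y <- s) y).

(* homogeneous component of Soc(R/I) determined by the simple module M/I *)
Definition hom_comp (I M : R -> Prop) (x : R) :=
  exists s : seq R, (forall y, y \in s -> exists N, [/\ minimal_over I N, iso_over I N M & N y])
                    /\ I (x - \sum_(y <- s) y).

(* the terms S_alpha of the socle sequence: S_0 = 0, S_{a+1} = preimage of Soc(R/S_a),
   unions at limits (= unions of nonempty families of earlier terms) *)
Inductive socle_term : (R -> Prop) -> Prop :=
  | st0 : socle_term (fun x => x = 0)
  | stS I : socle_term I -> socle_term (soc_over I)
  | stU (C : (R -> Prop) -> Prop) :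
      (exists I, C I) -> (forall I, C I -> socle_term I) ->
      socle_term (fun x => exists I, C I /\ I x).

Definition semiartinian := exists I, socle_term I /\ forall x, I x.

Definition maximal_right_ideal (M : R -> Prop) :=
  [/\ right_ideal M, ~ M 1 &
      forall N, right_ideal N -> subR M N -> ~ N 1 -> subR N M].

(* (right) primitive ideal = annihilator of a simple right module R/M *)
Definition primitive_ideal (P : R -> Prop) :=
  exists M, maximal_right_ideal M /\ eqR P (fun r => forall s, M (s * r)).

(* R/P is (right) artinian: DCC on right ideals of R containing P *)
Definition artinian_over (P : R -> Prop) :=
  forall f : nat -> R -> Prop,
    (forall n, right_ideal (f n) /\ subR P (f n)) ->
    (forall n, subR (f n.+1) (f n)) ->
    exists m, forall n, (m <= n)%N -> subR (f m) (f n).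

Definition prim_factors_artinian :=
  forall P, primitive_ideal P -> artinian_over P.

Definition quot_comm (I : R -> Prop) := forall x y, I (x * y - y * x).

(* (ii) for each homogeneous component H ~ P^n of Soc(R/I): End(P) commutative and n = 1,
   i.e. H is isomorphic to P^1 = P *)
Definition cond_ii (I : R -> Prop) :=
  forall M, minimal_over I M -> endo_comm I M /\ iso_over I (hom_comp I M) M.

(* c indexes the homogeneous components: each c b is a simple submodule of R/I,
   and every simple submodule is isomorphic to c b for exactly one b *)
Definition components_index (Idx : Type) (I : R -> Prop) (c : Idx -> R -> Prop) :=
  [/\ (forall b, minimal_over I (c b)),
      (forall N, minimal_over I N -> exists b, iso_over I N (c b)) &
      (forall b b', iso_over I (c b) (c b') -> b = b')].

(* psi : K -> End(M/I) is a ring isomorphism (product in End = composition) *)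
Definition endo_ring_hom (K : nzRingType) (I M : R -> Prop) (psi : K -> R -> R) :=
  [/\ (forall a, hom_over I M M (psi a)),
      (forall a b x, M x -> I (psi (a + b) x - (psi a x + psi b x))),
      (forall a b x, M x -> I (psi (a * b) x - psi a (psi b x))) &
      (forall x, M x -> I (psi 1 x - x))].

Definition endo_ring_iso (K : nzRingType) (I M : R -> Prop) (psi : K -> R -> R) :=
  [/\ endo_ring_hom I M psi,
      (forall a b, (forall x, M x -> I (psi a x - psi b x)) -> a = b) &
      (forall f, hom_over I M M f -> exists a, forall x, M x -> I (psi a x - f x))].

Section Prod.
Variables (Idx : Type) (K : Idx -> nzRingType).
Notation PT := (forall b, K b).

Definition pzero : PT := fun b => 0.
Definition psub (z w : PT) : PT := fun b => z b - w b.
Definition pmul (z w : PT) : PT := fun b => z b * w b.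
Definition psum (s : seq PT) : PT := fun b => \sum_(u <- s) u b.

Definition prod_right_ideal (Rb N : PT -> Prop) :=
  [/\ (forall z, N z -> Rb z), N pzero,
      (forall z w, N z -> N w -> N (psub z w)) &
      (forall z r, N z -> Rb r -> N (pmul z r))].

Definition prod_nonzero (N : PT -> Prop) := exists z, N z /\ exists b, z b <> 0.

Definition prod_minimal (Rb N : PT -> Prop) :=
  [/\ prod_right_ideal Rb N, prod_nonzero N &
      forall N', prod_right_ideal Rb N' -> (forall z, N' z -> N z) ->
        prod_nonzero N' -> forall z, N z -> N' z].

Definition prod_soc (Rb : PT -> Prop) (z : PT) :=
  exists s : seq PT, (forall u, List.In u s -> exists N, prod_minimal Rb N /\ N u)
                     /\ forall b, z b = psum s b.

(* elements of the direct sum (+)_b K b *)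
Definition fin_supp (z : PT) := exists t : list Idx, forall b, ~ List.In b t -> z b = 0.
End Prod.

Definition cond_iii (I : R -> Prop) :=
  exists (Idx : Type) (K : Idx -> nzRingType) (c : Idx -> R -> Prop)
         (psi : forall b, K b -> R -> R) (phi : forall b, {rmorphism R -> K b}),
    let Rbar := fun z : (forall b, K b) => exists x, forall b, z b = phi b x in
    [/\ components_index I c,
        (forall b, endo_ring_iso I (c b) (psi b)),
        (forall b (u v : K b), u * v = v * u),
        (forall x, I x <-> forall b, phi b x = 0) &
        (forall z, prod_soc Rbar z <-> fin_supp z)].

End Defs.

(* Let [I] be a socle term.  Every element outside [I] has a right multiple
   lying in a minimal right ideal [M] over [I] (the socle of [R/I] is essential,
   because the socle sequence exhausts [R]), and by regularity [M = e R + I] for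
   an idempotent [e].
   If [R/I] is commutative, [End(M/I)] is [R/ann M] acting by right
   multiplication, hence commutative, and every simple module isomorphic to [M]
   is [M] itself, so each homogeneous component is simple; the projections
   [R -> R/ann M] embed [R/I] into the product of these commutative rings, with
   socle the direct sum.
   Conversely, if every homogeneous component is simple, each [M] is two-sided
   modulo [I], so [e] is central modulo [I]; commutativity of [End(M/I)] on the
   left multiplications by [e x e] and [e y e] gives [(x y - y x) e] in [I], and
   essentiality plus regularity upgrade this to [x y - y x] in [I].  Condition
   (iii) gives commutativity at once. *)

From Pilot Require Import Defs.
From HB Require Import structures.
From mathcomp Require Import all_boot all_algebra boolp.
Set Implicit Arguments. Unset Strict Implicit. Unset Printing Implicit Defensive.
Import GRing.Theory.
Local Open Scope ring_scope.

Lemma subR_antisym (R : nzRingType) (A B : R -> Prop) : subR A B -> subR B A -> A = B.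
Proof. by move=> AB BA; apply/predeqP => x; split; [apply: AB | apply: BA]. Qed.

(* A notation rather than a definition, so that it is literally the shape of
   the congruences appearing in the hypotheses of [Defs]. *)
Notation eqmod J x y := (J (x - y)).

Definition ideal (R : nzRingType) (J : R -> Prop) :=
  right_ideal J /\ forall r x, J x -> J (r * x).

(** * Congruences modulo right ideals *)

Section RightIdeal.
Variables (R : nzRingType) (J : R -> Prop).
Hypothesis hJ : right_ideal J.
Implicit Types x y z r : R.

Lemma rideal0 : J 0. Proof. by case: hJ. Qed.
Lemma ridealB x y : J x -> J y -> J (x - y). Proof. by case: hJ => _ + _; apply. Qed.
Lemma ridealMr x r : J x -> J (x * r). Proof. by case: hJ => _ _; apply. Qed.
Lemma ridealN x : J x -> J (- x).
Proof. by move=> Jx; rewrite -sub0r; apply: ridealB => //; apply: rideal0. Qed.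
Lemma ridealD x y : J x -> J y -> J (x + y).
Proof. by move=> Jx Jy; rewrite -[y]opprK; apply: ridealB => //; apply: ridealN. Qed.
Lemma rideal_sum (s : seq R) : (forall y, y \in s -> J y) -> J (\sum_(y <- s) y).
Proof.
elim: s => [|a s IH] Js; first by rewrite big_nil; apply: rideal0.
rewrite big_cons; apply: ridealD; first by apply: Js; rewrite mem_head.
by apply: IH => y sy; apply: Js; rewrite inE sy orbT.
Qed.

Lemma eqmod_refl x : eqmod J x x. Proof. by rewrite subrr; apply: rideal0. Qed.
Lemma eqmod_sym x y : eqmod J x y -> eqmod J y x.
Proof. by move/ridealN; rewrite opprB. Qed.
Lemma eqmod_trans x y z : eqmod J x y -> eqmod J y z -> eqmod J x z.
Proof. by move=> xy yz; have := ridealD xy yz; rewrite subrKA. Qed.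
Lemma eqmodD x x' y y' : eqmod J x x' -> eqmod J y y' -> eqmod J (x + y) (x' + y').
Proof. by move=> xx yy; have := ridealD xx yy; rewrite opprD addrACA. Qed.
Lemma eqmodN x x' : eqmod J x x' -> eqmod J (- x) (- x').
Proof. by move/ridealN; rewrite opprB opprK addrC. Qed.
Lemma eqmodB x x' y y' : eqmod J x x' -> eqmod J y y' -> eqmod J (x - y) (x' - y').
Proof. by move=> xx yy; apply: eqmodD => //; apply: eqmodN. Qed.
Lemma eqmodMr x x' r : eqmod J x x' -> eqmod J (x * r) (x' * r).
Proof. by move/(ridealMr r); rewrite mulrBl. Qed.
Lemma rideal_eqmod x y : eqmod J x y -> J y -> J x.
Proof. by move=> xy Jy; have := ridealD xy Jy; rewrite subrK. Qed.
End RightIdeal.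

Lemma eqmod_mem (R : nzRingType) (J M : R -> Prop) x y :
  right_ideal M -> subR J M -> eqmod J x y -> M y -> M x.
Proof. by move=> hM JM /JM; apply: rideal_eqmod. Qed.

Section TwoSidedIdeal.
Variables (R : nzRingType) (J : R -> Prop).
Hypothesis hJ : ideal J.
Implicit Types x y r : R.

Lemma idealMl r x : J x -> J (r * x). Proof. exact: hJ.2. Qed.
Lemma eqmodMl r x x' : eqmod J x x' -> eqmod J (r * x) (r * x').
Proof. by move/(idealMl r); rewrite mulrBr. Qed.
Lemma eqmodM x x' y y' : eqmod J x x' -> eqmod J y y' -> eqmod J (x * y) (x' * y').
Proof. move=> xx yy; apply: (eqmod_trans hJ.1 (eqmodMr hJ.1 y xx)); exact: eqmodMl. Qed.
End TwoSidedIdeal.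

Section Modules.
Variables (R : nzRingType) (J : R -> Prop).
Hypothesis hJ : right_ideal J.
Implicit Types (A B N M : R -> Prop) (f : R -> R) (x y r : R).

Lemma hom_mem A B f x : hom_over J A B f -> A x -> B (f x).
Proof. by case=> + _ _ _; apply. Qed.

Lemma hom_eqmodMr A B f x r : hom_over J A B f -> A x -> eqmod J (f (x * r)) (f x * r).
Proof. by case=> _ _ _ + Ax; apply. Qed.

Lemma hom_eqmodB A B f x y : right_ideal A -> hom_over J A B f -> A x -> A y ->
  eqmod J (f (x - y)) (f x - f y).
Proof.
move=> hA [_ _ fD _] Ax Ay; have Axy : A (x - y) by apply: ridealB.
have := fD _ _ Axy Ay; rewrite subrK => fxy.
apply: eqmod_sym => //.
have := eqmodB hJ fxy (eqmod_refl hJ (f y)).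
by rewrite addrK.
Qed.

Lemma hom_eqmod A B f x y : right_ideal A -> hom_over J A B f -> A x -> A y ->
  eqmod J x y -> eqmod J (f x) (f y).
Proof.
move=> hA hf Ax Ay xy; apply: (rideal_eqmod hJ (eqmod_sym hJ (hom_eqmodB hA hf Ax Ay))).
by case: hf => _ + _ _; apply => //; apply: ridealB.
Qed.

Lemma iso_refl A : iso_over J A A.
Proof.
exists id; split=> [|//|y Ay]; last by exists y; split=> //; apply: eqmod_refl.
by split=> // *; apply: eqmod_refl.
Qed.

Lemma iso_sym A B : right_ideal A -> right_ideal B -> iso_over J A B -> iso_over J B A.
Proof.
move=> hA hB [f [hf f_inj f_onto]].
have /choice[g gP] : forall y, exists x, B y -> A x /\ eqmod J (f x) y.
  move=> y; have [By|nBy] := lem (B y); last by exists 0.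
  by have [x [Ax fx]] := f_onto y By; exists x.
have f_eqmod x x' : A x -> A x' -> eqmod J (f x) (f x') -> eqmod J x x'.
  move=> Ax Ax' fxx'; apply: f_inj; first exact: ridealB.
  exact: (rideal_eqmod hJ (hom_eqmodB hA hf Ax Ax') fxx').
have [fB f0 fD fM] := hf.
exists g; split; first split.
- by move=> y /gP [].
- move=> y By Jy; have [Ag fg] := gP y By.
  by apply: f_inj => //; apply: (rideal_eqmod hJ fg Jy).
- move=> y y' By By'; have Byy' : B (y + y') by apply: ridealD.
  have [A1 f1] := gP _ Byy'; have [A2 f2] := gP _ By; have [A3 f3] := gP _ By'.
  apply: f_eqmod => //; first by apply: ridealD.
  apply: (eqmod_trans hJ f1); apply: eqmod_sym => //.
  exact: (eqmod_trans hJ (fD _ _ A2 A3) (eqmodD hJ f2 f3)).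
- move=> y r By; have Byr : B (y * r) by apply: ridealMr.
  have [A1 f1] := gP _ Byr; have [A2 f2] := gP _ By.
  apply: f_eqmod => //; first by apply: ridealMr.
  apply: (eqmod_trans hJ f1); apply: eqmod_sym => //.
  exact: (eqmod_trans hJ (fM _ r A2) (eqmodMr hJ r f2)).
- move=> y By Jgy; have [Ag fg] := gP y By.
  by apply: (rideal_eqmod hJ (eqmod_sym hJ fg)); apply: f0.
- move=> x Ax; exists (f x); split; first exact: fB.
  by have [Ag fg] := gP _ (fB x Ax); apply: f_eqmod.
Qed.

Definition span_mod (Q : R -> Prop) x :=
  exists s : seq R, (forall y, y \in s -> Q y) /\ J (x - \sum_(y <- s) y).

Lemma span_mod_sup Q x : J x -> span_mod Q x.
Proof. by exists [::]; rewrite big_nil subr0. Qed.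

Lemma span_mod_of Q x : Q x -> span_mod Q x.
Proof.
exists [:: x]; split=> [y|]; first by rewrite inE => /eqP->.
by rewrite big_seq1; apply: eqmod_refl.
Qed.

Lemma span_mod_ri Q : (forall y, Q y -> Q (- y)) -> (forall y r, Q y -> Q (y * r)) ->
  right_ideal (span_mod Q).
Proof.
move=> QN QM; split; first by apply: span_mod_sup; apply: rideal0.
- move=> x y [s [Qs xs]] [t [Qt yt]]; exists (s ++ map -%R t); split.
    by move=> u; rewrite mem_cat => /orP[/Qs // | /mapP[v /Qt Qv ->]]; apply: QN.
  by rewrite big_cat big_map /= sumrN; apply: eqmodB.
- move=> x r [s [Qs xs]]; exists (map ( *%R^~ r) s); split.
    by move=> u /mapP[v /Qs Qv ->]; apply: QM.
  by rewrite big_map -mulr_suml; apply: eqmodMr.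
Qed.

Lemma span_mod_sub Q M : right_ideal M -> subR J M -> subR Q M -> subR (span_mod Q) M.
Proof.
move=> hM JM QM x [s [Qs xs]]; apply: (eqmod_mem hM JM xs).
by apply: (rideal_sum hM) => y /Qs /QM.
Qed.
End Modules.

Lemma hom_compE (R : nzRingType) (J M : R -> Prop) :
  hom_comp J M = span_mod J (fun y => exists N, [/\ minimal_over J N, iso_over J N M & N y]).
Proof. by []. Qed.

Lemma span_mod_Ml (R : nzRingType) (J Q : R -> Prop) x r : ideal J ->
  (forall y, Q y -> Q (r * y)) -> span_mod J Q x -> span_mod J Q (r * x).
Proof.
move=> hJ QM [s [Qs xs]]; exists (map ( *%R r) s); split.
  by move=> u /mapP[v /Qs Qv ->]; apply: QM.
by rewrite big_map -mulr_sumr; apply: eqmodMl.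
Qed.

(** * Minimal right ideals and the socle *)

Section MinimalOver.
Variables (R : nzRingType) (J : R -> Prop).
Implicit Types (M N : R -> Prop) (x : R).

Lemma minimal_ri N : minimal_over J N -> right_ideal N. Proof. by case. Qed.
Lemma minimal_sup N : minimal_over J N -> subR J N. Proof. by case. Qed.

Lemma minimal_sub_of_mem M N x : minimal_over J M -> right_ideal N -> subR J N ->
  subR N M -> N x -> ~ J x -> subR M N.
Proof. by move=> [_ _ _ Mmin] hN JN NM Nx nJx; apply: Mmin => //; exists x. Qed.

Lemma minimal_sub_eq M N : minimal_over J M -> minimal_over J N -> subR N M -> N = M.
Proof.
move=> MJ [hN JN [n [Nn nJn]] _] NM; apply: subR_antisym => //.
exact: minimal_sub_of_mem MJ hN JN NM Nn nJn.
Qed.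

Lemma minimal_meet_eq M N z : minimal_over J M -> minimal_over J N -> M z -> N z -> ~ J z ->
  M = N.
Proof.
move=> MJ NJ Mz Nz nJz; have [hM JM _ _] := MJ; have [hN JN _ _] := NJ.
pose MN x := M x /\ N x.
have hMN : right_ideal MN.
  split; first by split; apply: rideal0.
  - by move=> x y [Mx Nx] [My Ny]; split; apply: ridealB.
  - by move=> x r [Mx Nx]; split; apply: ridealMr.
have JMN : subR J MN by move=> x Jx; split; [apply: JM | apply: JN].
have MMN := minimal_sub_of_mem MJ hMN JMN (fun x (h : MN x) => proj1 h) (conj Mz Nz) nJz.
by apply: (minimal_sub_eq NJ MJ) => x /MMN [].
Qed.
End MinimalOver.

Section LeftTranslates.
Variables (R : nzRingType) (J : R -> Prop).
Hypothesis hJ : ideal J.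
Let hJr := hJ.1.
Implicit Types (N : R -> Prop) (u v x r : R).

Lemma minimal_lmul_sub N N' r : minimal_over J N -> right_ideal N' -> subR J N' ->
  (exists u, [/\ N u, ~ J u & N' (r * u)]) -> forall u, N u -> N' (r * u).
Proof.
move=> NJ hN' JN' [u0 [Nu0 nJu0 N'ru0]] u Nu; have [hN JN _ _] := NJ.
pose P u := N u /\ N' (r * u).
have hP : right_ideal P.
  split; first by split; [apply: rideal0 | rewrite mulr0; apply: rideal0].
  - by move=> x y [Nx N'x] [Ny N'y]; split; [apply: ridealB | rewrite mulrBr; apply: ridealB].
  - by move=> x s [Nx N'x]; split; [apply: ridealMr | rewrite mulrA; apply: ridealMr].
have JP : subR J P by move=> x Jx; split; [apply: JN | apply/JN'/(idealMl hJ)].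
have PN : subR P N by move=> x [].
by have [] := minimal_sub_of_mem NJ hP JP PN (conj Nu0 N'ru0) nJu0 Nu.
Qed.

Definition ltranslate r N v := exists u, N u /\ eqmod J v (r * u).

Lemma ltranslate_ri N r : right_ideal N -> right_ideal (ltranslate r N).
Proof.
move=> hN; split.
- by exists 0; split; [apply: rideal0 | rewrite mulr0; apply: eqmod_refl].
- move=> x y [u [Nu xu]] [v [Nv yv]]; exists (u - v); split; first exact: ridealB.
  by rewrite mulrBr; apply: eqmodB.
- move=> x s [u [Nu xu]]; exists (u * s); split; first exact: ridealMr.
  by rewrite mulrA; apply: eqmodMr.
Qed.

Lemma ltranslate_sup N r : right_ideal N -> subR J (ltranslate r N).
Proof. by move=> hN v Jv; exists 0; split; [apply: rideal0 | rewrite mulr0 subr0]. Qed.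

Lemma ltranslate_minimal N r : minimal_over J N -> (exists u, N u /\ ~ J (r * u)) ->
  minimal_over J (ltranslate r N).
Proof.
move=> NJ [u0 [Nu0 nJru0]]; have hN := minimal_ri NJ.
split; [exact: ltranslate_ri | exact: ltranslate_sup | |].
  by exists (r * u0); split=> //; exists u0; split=> //; apply: eqmod_refl.
move=> N' hN' JN' N'sub [n' [N'n' nJn']] v [u [Nu vu]].
have [u1 [Nu1 n'u1]] := N'sub _ N'n'.
have N'ru1 : N' (r * u1) by apply: eqmod_mem hN' JN' (eqmod_sym hJr n'u1) N'n'.
have nJu1 : ~ J u1 by move=> /(idealMl hJ r) Jru1; apply/nJn'/(rideal_eqmod hJr n'u1).
exact: eqmod_mem hN' JN' vu (minimal_lmul_sub NJ hN' JN' (ex_intro _ u1 (And3 Nu1 nJu1 N'ru1)) Nu).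
Qed.

Lemma ltranslate_iso N r : minimal_over J N -> (exists u, N u /\ ~ J (r * u)) ->
  iso_over J N (ltranslate r N).
Proof.
move=> NJ [u0 [Nu0 nJru0]]; have hN := minimal_ri NJ.
exists ( *%R r); split; first split.
- by move=> x Nx; exists x; split=> //; apply: eqmod_refl.
- by move=> x _ /(idealMl hJ r).
- by move=> x y _ _; rewrite mulrDr subrr; apply: rideal0.
- by move=> x s _; rewrite mulrA subrr; apply: rideal0.
- move=> x Nx Jrx; apply: contrapT => nJx; apply: nJru0.
  exact: (minimal_lmul_sub NJ hJr (fun _ => id) (ex_intro _ x (And3 Nx nJx Jrx)) Nu0).
- by move=> y [u [Nu yu]]; exists u; split=> //; apply: eqmod_sym.
Qed.

Lemma minimal_lmul_mem N r y : minimal_over J N -> N y ->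
  exists N', minimal_over J N' /\ N' (r * y).
Proof.
move=> NJ Ny; have [Jry|nJry] := lem (J (r * y)).
  by exists N; split=> //; apply: (minimal_sup NJ).
exists (ltranslate r N); split; first by apply: ltranslate_minimal => //; exists y.
by exists y; split=> //; apply: eqmod_refl.
Qed.

Lemma soc_ideal : ideal (soc_over J).
Proof.
split.
  apply: (span_mod_ri hJr).
  - by move=> y [N [NJ Ny]]; exists N; split=> //; apply: (ridealN (minimal_ri NJ)).
  - by move=> y r [N [NJ Ny]]; exists N; split=> //; apply: (ridealMr (minimal_ri NJ)).
move=> r x; apply: (span_mod_Ml hJ) => y [N [NJ Ny]]; exact: (minimal_lmul_mem r NJ Ny).
Qed.
End LeftTranslates.

(** * The socle sequence *)

Section SocleSequence.
Variable R : nzRingType.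
Implicit Types I J K : R -> Prop.

Lemma soc_sup J : subR J (soc_over J).
Proof. exact: span_mod_sup. Qed.

Lemma socle_term0 J : socle_term J -> J 0.
Proof.
elim=> [//|I _ I0|C [I0 CI0] _ IH]; first exact: soc_sup.
by exists I0; split=> //; apply: IH.
Qed.

(* The usual tower argument: [K] is comparable with every socle term as soon
   as no socle term strictly below [K] has its socle escaping [K]. *)
Definition soc_bounded K :=
  forall J, socle_term J -> subR J K -> ~ subR K J -> subR (soc_over J) K.

Lemma socle_term_cmp_of_bounded K : socle_term K -> soc_bounded K ->
  forall J, socle_term J -> subR J K \/ subR (soc_over K) J.
Proof.
move=> TK BK J; elim=> [|I TI IH|C _ TC IH].
- by left=> y ->; apply: socle_term0.
- case: IH => [IK|KI]; last by right=> y /KI; apply: soc_sup.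
  have [KI|nKI] := lem (subR K I); last by left; apply: BK.
  by right; rewrite (subR_antisym IK KI).
- have [CK|] := lem (forall I, C I -> subR I K).
    by left=> y [I [CI Iy]]; apply: CK CI _ Iy.
  move=> /existsNP[I /not_implyP[CI nIK]].
  by case: (IH I CI) => // KI; right=> y /KI Iy; exists I.
Qed.

Lemma socle_term_bounded K : socle_term K -> soc_bounded K.
Proof.
elim=> [|I TI IH|C _ TC IH].
- by move=> J TJ _ []; move=> y ->; apply: socle_term0.
- move=> J TJ JsI nsIJ; case: (socle_term_cmp_of_bounded TI IH TJ) => [JI|//].
  have [IJ|nIJ] := lem (subR I J); first by rewrite (subR_antisym JI IJ).
  by move=> y /(IH J TJ JI nIJ); apply: soc_sup.
- move=> J TJ JU nUJ.
  have [I [CI nIJ]] : exists I, C I /\ ~ subR I J.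
    apply: contrapT => /forallNP CJ; apply: nUJ => y [I [CI Iy]].
    by have /not_andP[//|/contrapT] := CJ I; apply.
  case: (socle_term_cmp_of_bounded (TC I CI) (IH I CI) TJ) => [JI|IJ].
    by move=> y /(IH I CI J TJ JI nIJ) Iy; exists I.
  by exfalso; apply: nIJ => y /soc_sup /IJ.
Qed.

Lemma socle_term_chain K J : socle_term K -> socle_term J ->
  subR J K \/ subR (soc_over K) J.
Proof. by move=> TK; apply: (socle_term_cmp_of_bounded TK (socle_term_bounded TK)). Qed.

Lemma socle_term_total I J : socle_term I -> socle_term J -> subR I J \/ subR J I.
Proof.
move=> TI TJ; case: (socle_term_chain TI TJ) => [|IJ]; first by right.
by left=> y /soc_sup /IJ.
Qed.

Lemma socle_term_top K : socle_term K -> subR (soc_over K) K ->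
  forall J, socle_term J -> subR J K.
Proof.
move=> TK sK J; elim=> [|I TI IK|C _ _ IH].
- by move=> y ->; apply: socle_term0.
- by case: (socle_term_chain TI TK) => // KI; rewrite (subR_antisym IK KI).
- by move=> y [I [CI Iy]]; apply: IH CI _ Iy.
Qed.

Lemma socle_term_ideal J : socle_term J -> ideal J.
Proof.
elim=> [|I _ hI|C [I0 CI0] TC hC]; first split; first split.
- by [].
- by move=> x y -> ->; rewrite subr0.
- by move=> x r ->; rewrite mul0r.
- by move=> r x ->; rewrite mulr0.
- exact: soc_ideal.
split; first split.
- by exists I0; split=> //; exact: (socle_term0 (TC _ CI0)).
- move=> x y [I1 [C1 I1x]] [I2 [C2 I2y]].
  case: (socle_term_total (TC _ C1) (TC _ C2)) => [I12|I21].
    by exists I2; split=> //; exact: (ridealB (hC _ C2).1 (I12 _ I1x) I2y).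
  by exists I1; split=> //; exact: (ridealB (hC _ C1).1 I1x (I21 _ I2y)).
- by move=> x r [I1 [C1 I1x]]; exists I1; split=> //; exact: (ridealMr (hC _ C1).1 _ I1x).
- by move=> r x [I1 [C1 I1x]]; exists I1; split=> //; exact: (idealMl (hC _ C1) _ I1x).
Qed.
End SocleSequence.

(** * Essentiality of the socle *)

Section Principal.
Variable R : nzRingType.
Implicit Types (J U M N : R -> Prop) (v w a b : R).

Definition principal J w v := exists a, J (v - w * a).

Lemma principal_ri J w : right_ideal J -> right_ideal (principal J w).
Proof.
move=> hJ; split.
- by exists 0; rewrite mulr0 subr0; apply: rideal0.
- by move=> x y [a xa] [b yb]; exists (a - b); rewrite mulrBr; apply: eqmodB.
- by move=> x s [a xa]; exists (a * s); rewrite mulrA; apply: eqmodMr.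
Qed.

Lemma principal_sup J w : subR J (principal J w).
Proof. by move=> v Jv; exists 0; rewrite mulr0 subr0. Qed.

Lemma principal_mem J w : right_ideal J -> principal J w w.
Proof. by move=> hJ; exists 1; rewrite mulr1; apply: eqmod_refl. Qed.

Lemma principal_sub J M w : right_ideal M -> subR J M -> M w -> subR (principal J w) M.
Proof. by move=> hM JM Mw v [a va]; apply: (eqmod_mem hM JM va); apply: ridealMr. Qed.

(* [y a |-> w a] is well defined, so [w R + U] is a quotient of [N = y R + U]. *)
Lemma minimal_principal_of_dominated U N y w : right_ideal U -> minimal_over U N -> N y ->
  ~ U w -> (forall a, U (y * a) -> U (w * a)) -> minimal_over U (principal U w).
Proof.
move=> hU NU Ny nUw yw; have hN := minimal_ri NU.
split; [exact: principal_ri | exact: principal_sup | |].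
  by exists w; split=> //; apply: principal_mem.
move=> N' hN' UN' N'w [n' [N'n' nUn']].
pose Q q := exists a, N' (w * a) /\ U (q - y * a).
have hQ : right_ideal Q.
  split; first by exists 0; rewrite !mulr0 subr0; split; [apply: rideal0 | apply: rideal0].
  - move=> q1 q2 [a1 [N'1 q1a]] [a2 [N'2 q2a]]; exists (a1 - a2).
    by rewrite !mulrBr; split; [apply: ridealB | apply: eqmodB].
  - move=> q s [a [N'a qa]]; exists (a * s).
    by rewrite !mulrA; split; [apply: ridealMr | apply: eqmodMr].
have UQ : subR U Q by move=> q Uq; exists 0; rewrite !mulr0 subr0; split=> //; apply: rideal0.
have QN : subR Q N.
  by move=> q [a [_ qa]]; apply: (eqmod_mem hN (minimal_sup NU) qa); apply: ridealMr.
have [a0 n'a0] := N'w _ N'n'.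
have N'a0 : N' (w * a0) by apply: (eqmod_mem hN' UN' (eqmod_sym hU n'a0)).
have nUya0 : ~ U (y * a0) by move=> /yw Uwa0; apply/nUn'/(rideal_eqmod hU n'a0).
have NQ := minimal_sub_of_mem NU hQ UQ QN (ex_intro _ a0 (conj N'a0 (eqmod_refl hU _))) nUya0.
move=> v [b vb]; have [a [N'a yba]] := NQ _ (ridealMr hN b Ny).
have /yw : U (y * (b - a)) by rewrite mulrBr.
by rewrite mulrBr => wba; apply: (eqmod_mem hN' UN' (eqmod_trans hU vb wba)).
Qed.

Lemma sum_minimal_has_minimal_multiple U (s : seq R) w : right_ideal U ->
  (forall y, y \in s -> exists N, minimal_over U N /\ N y) ->
  ~ U w -> U (w - \sum_(y <- s) y) ->
  exists a, ~ U (w * a) /\ minimal_over U (principal U (w * a)).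
Proof.
move=> hU; have [n] := ubnP (size s); elim: n => // n IH in s w *.
case: s => [|y s] /= ltsn Qs nUw ws.
  by move: ws; rewrite big_nil subr0.
pose sa a := [seq z * a | z <- s].
have [[a [nUwa wsa]]|noa] := lem (exists a, ~ U (w * a) /\ U (w * a - \sum_(z <- sa a) z)).
  have Qsa : forall z, z \in sa a -> exists N, minimal_over U N /\ N z.
    move=> _ /mapP[z sz ->].
    have [N [NU Nz]] : exists N, minimal_over U N /\ N z by apply: Qs; rewrite inE sz orbT.
    by exists N; split=> //; apply: (ridealMr (minimal_ri NU)).
  have ltsa : (size (sa a) < n)%N by rewrite size_map.
  have [a' [nU Umin]] := IH (sa a) (w * a) ltsa Qsa nUwa wsa.
  by exists (a * a'); rewrite mulrA.
have [N [NU Ny]] := Qs y (mem_head _ _).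
have yw a : U (y * a) -> U (w * a).
  move=> Uya; apply: contrapT => nUwa; apply: noa; exists a; split=> //.
  rewrite big_map -mulr_suml; move: ws; rewrite big_cons => /(eqmodMr hU a).
  by rewrite mulrDl opprD addrA => /(ridealD hU Uya); rewrite addrA [y * a + _]addrC subrK.
exists 1; rewrite mulr1; split=> //.
exact: minimal_principal_of_dominated hU NU Ny nUw yw.
Qed.

(* [principal U w] and [principal I w] can only differ by elements of [w R],
   which lie in [I] as soon as they lie in [U]. *)
Lemma minimal_principal_descend I U w : right_ideal I -> right_ideal U -> subR I U ->
  (forall b, U (w * b) -> I (w * b)) -> minimal_over U (principal U w) ->
  minimal_over I (principal I w).
Proof.
move=> hI hU IU wUI Umin; have [_ _ [m [[a ma] nUm]] _] := Umin.
have nIw : ~ I w.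
  by move=> Iw; apply/nUm/(rideal_eqmod hU ma)/IU/(ridealMr hI).
split; [exact: principal_ri | exact: principal_sup | |].
  by exists w; split=> //; apply: principal_mem.
move=> N' hN' IN' N'w [n' [N'n' nIn']].
pose N'' v := exists n, N' n /\ U (v - n).
have hN'' : right_ideal N''.
  split; first by exists 0; rewrite subr0; split; [apply: rideal0 | apply: rideal0].
  - move=> x y [n1 [N'1 xn1]] [n2 [N'2 yn2]]; exists (n1 - n2).
    by split; [apply: ridealB | apply: eqmodB].
  - by move=> x t [n1 [N'1 xn1]]; exists (n1 * t); split; [apply: ridealMr | apply: eqmodMr].
have UN'' : subR U N'' by move=> v Uv; exists 0; rewrite subr0; split=> //; apply: rideal0.
have N''w : subR N'' (principal U w).
  move=> v [n [N'n vn]]; have [b nb] := N'w _ N'n.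
  by exists b; apply: (eqmod_trans hU vn (IU _ nb)).
have [b0 n'b0] := N'w _ N'n'.
have nUn' : ~ U n'.
  move=> Un'; apply/nIn'/(rideal_eqmod hI n'b0)/wUI.
  exact: (rideal_eqmod hU (eqmod_sym hU (IU _ n'b0)) Un').
have N''n' : N'' n' by exists n'; split=> //; apply: eqmod_refl.
have wN'' := minimal_sub_of_mem Umin hN'' UN'' N''w N''n' nUn'.
move=> v [b vb]; have [n [N'n wbn]] := wN'' _ (ex_intro _ b (eqmod_refl hU _)).
have [b' nb'] := N'w _ N'n.
have /wUI : U (w * (b - b')) by rewrite mulrBr; apply: (eqmod_trans hU wbn (IU _ nb')).
rewrite mulrBr => wbb'; apply: (eqmod_mem hN' IN' (eqmod_trans hI vb _) N'n).
exact: (eqmod_trans hI wbb' (eqmod_sym hI nb')).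
Qed.
End Principal.

Lemma socle_essential (R : nzRingType) (I : R -> Prop) c : semiartinian R -> socle_term I ->
  ~ I c -> exists q M, [/\ minimal_over I M, M (c * q) & ~ I (c * q)].
Proof.
move=> [J0 [TJ0 J0T]] TI nIc; have hI := (socle_term_ideal TI).1.
pose C K := socle_term K /\ forall a, K (c * a) -> I (c * a).
pose U x := exists K, C K /\ K x.
have TU : socle_term U by apply: stU; [exists I | move=> K []].
have hU := (socle_term_ideal TU).1.
have cUI a : U (c * a) -> I (c * a) by move=> [K [[_ cKI] Kca]]; apply: cKI.
have IU : subR I U by move=> x Ix; exists I.
have [r [[s [Qs crs]] nIcr]] : exists r, soc_over U (c * r) /\ ~ I (c * r).
  apply: contrapT => /forallNP socI; apply: nIc; rewrite -[c]mulr1; apply: cUI.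
  have socU : subR (soc_over U) U.
    move=> x sx; exists (soc_over U); split=> //; split; first exact: stS.
    by move=> a sa; have /not_andP[//|/contrapT] := socI a.
  exact: socle_term_top TU socU J0 TJ0 _ (J0T _).
have nUcr : ~ U (c * r) by move/cUI.
have [a [nUcra Umin]] := sum_minimal_has_minimal_multiple hU Qs nUcr crs.
exists (r * a), (principal I (c * r * a)); rewrite mulrA; split.
- apply: minimal_principal_descend hI hU IU _ Umin => b.
  by rewrite -!mulrA => /cUI.
- exact: principal_mem.
- by move/IU.
Qed.

(** * Idempotent generators and conditions (i), (ii) *)

Section Regular.
Variables (R : nzRingType) (I : R -> Prop).
Hypotheses (R_reg : vN_regular R) (hI : ideal I).
Let hIr := hI.1.
Implicit Types (A M N : R -> Prop) (h : R -> R) (e u x y r t : R).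

Definition idem_gen M e := [/\ M e, ~ I e, e * e = e & subR M (principal I e)].

Lemma minimal_idem_gen M : minimal_over I M -> exists e, idem_gen M e.
Proof.
move=> MI; have [hM IM [m [Mm nIm]] _] := MI; have [x mxm] := R_reg m.
have Mmx : M (m * x) by apply: ridealMr.
have nImx : ~ I (m * x) by move=> /(ridealMr hIr m); rewrite mxm.
exists (m * x); split=> //; first by rewrite mulrA mxm.
exact: (minimal_sub_of_mem MI (principal_ri _ hIr) (principal_sup _) (principal_sub hM IM Mmx)
  (principal_mem _ hIr) nImx).
Qed.

Lemma idem_gen_eqmod M e u : idem_gen M e -> M u -> eqmod I u (e * u).
Proof.
move=> [_ _ ee Me] /Me [t ut]; apply: (eqmod_trans hIr ut).
have := eqmodMl hI e ut; rewrite mulrA ee; exact: eqmod_sym.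
Qed.

Lemma hom_eqmod_idem M e h u t : right_ideal M -> idem_gen M e -> hom_over I M M h ->
  M u -> eqmod I u (e * t) -> eqmod I (h u) (h e * t).
Proof.
move=> hM [Me _ _ _] hh Mu ut; have Met : M (e * t) by apply: ridealMr.
exact: (eqmod_trans hIr (hom_eqmod hIr hM hh Mu Met ut) (hom_eqmodMr t hh Me)).
Qed.

Lemma iso_over_sub_minimal A M : minimal_over I M -> right_ideal A -> subR M A ->
  iso_over I A M -> subR A M.
Proof.
move=> MI hA MA [f [hf f_inj _]]; have [hM IM [m [Mm nIm]] _] := MI; have [fM f0 _ _] := hf.
pose F y := exists n, M n /\ eqmod I y (f n).
have If0 : I (f 0) by apply: f0; apply: rideal0.
have hF : right_ideal F.
  split; first by exists 0; split; [apply: rideal0 | rewrite sub0r; apply: ridealN].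
  - move=> y1 y2 [n1 [Mn1 yn1]] [n2 [Mn2 yn2]]; exists (n1 - n2); split; first exact: ridealB.
    apply: (eqmod_trans hIr (eqmodB hIr yn1 yn2)); apply: eqmod_sym => //.
    exact: (hom_eqmodB hIr hA hf (MA _ Mn1) (MA _ Mn2)).
  - move=> y s [n [Mn yn]]; exists (n * s); split; first exact: ridealMr.
    apply: (eqmod_trans hIr (eqmodMr hIr s yn)); apply: eqmod_sym => //.
    exact: (hom_eqmodMr s hf (MA _ Mn)).
have IF : subR I F by move=> y Iy; exists 0; split; [apply: rideal0 | apply: ridealB].
have FM : subR F M by move=> y [n [Mn yn]]; apply: (eqmod_mem hM IM yn); apply/fM/MA.
have Ffm : F (f m) by exists m; split=> //; apply: eqmod_refl.
have nIfm : ~ I (f m) by move/(f_inj _ (MA _ Mm)).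
move=> z Az; have [n [Mn zn]] := minimal_sub_of_mem MI hF IF FM Ffm nIfm (fM z Az).
apply: (eqmod_mem hM IM _ Mn); apply: f_inj; first by apply: ridealB => //; apply: MA.
exact: (rideal_eqmod hIr (hom_eqmodB hIr hA hf Az (MA _ Mn)) zn).
Qed.

Lemma hom_comp_ri M : right_ideal (hom_comp I M).
Proof.
rewrite hom_compE; apply: (span_mod_ri hIr).
- by move=> y [N [NI NM Ny]]; exists N; split=> //; apply: (ridealN (minimal_ri NI)).
- by move=> y r [N [NI NM Ny]]; exists N; split=> //; apply: (ridealMr (minimal_ri NI)).
Qed.

Lemma minimal_sub_hom_comp M : minimal_over I M -> subR M (hom_comp I M).
Proof.
move=> MI u Mu; rewrite hom_compE; apply: (span_mod_of hIr).
by exists M; split=> //; apply: iso_refl.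
Qed.

Section Commutative.
Hypothesis I_comm : quot_comm I.

Lemma endo_comm_of_quot_comm M : minimal_over I M -> endo_comm I M.
Proof.
move=> MI f g hf hg x Mx; have hM := minimal_ri MI.
have [e eM] := minimal_idem_gen MI; have [Me _ _ Mgen] := eM.
have [t xt] := Mgen x Mx; have [sf fe] := Mgen _ (hom_mem hf Me).
have [sg ge] := Mgen _ (hom_mem hg Me).
have img h s : hom_over I M M h -> eqmod I (h e) (e * s) ->
    forall u t', M u -> eqmod I u (e * t') -> eqmod I (h u) (e * (s * t')).
  move=> hh hs u t' Mu ut'; rewrite mulrA.
  exact: (eqmod_trans hIr (hom_eqmod_idem hM eM hh Mu ut') (eqmodMr hIr t' hs)).
have fgx := img f sf hf fe _ _ (hom_mem hg Mx) (img g sg hg ge _ _ Mx xt).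
have gfx := img g sg hg ge _ _ (hom_mem hf Mx) (img f sf hf fe _ _ Mx xt).
apply: (eqmod_trans hIr fgx); apply: (eqmod_trans hIr _ (eqmod_sym hIr gfx)).
by apply: eqmodMl => //; rewrite !mulrA; apply: eqmodMr => //; apply: I_comm.
Qed.

Lemma iso_sub_of_quot_comm M N : minimal_over I M -> right_ideal N -> iso_over I N M ->
  subR N M.
Proof.
move=> MI hN [f [hf f_inj _]] n Nn; have [hM IM _ _] := MI.
have [e eM] := minimal_idem_gen MI; have [Me _ ee Mgen] := eM.
have In1e : I (n * (1 - e)).
  apply: f_inj; first exact: ridealMr.
  apply: (rideal_eqmod hIr (hom_eqmodMr (1 - e) hf Nn)).
  have [t fnt] := Mgen _ (hom_mem hf Nn).
  apply: (rideal_eqmod hIr (eqmodMr hIr (1 - e) fnt)).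
  apply: (rideal_eqmod hIr (eqmodMr hIr (1 - e) (I_comm e t))).
  by rewrite -mulrA mulrBr mulr1 ee subrr mulr0; apply: rideal0.
move: In1e; rewrite mulrBr mulr1 => /(eqmod_mem hM IM); apply.
exact: (eqmod_mem hM IM (I_comm n e) (ridealMr hM n Me)).
Qed.

Lemma hom_comp_quot_comm M : minimal_over I M -> hom_comp I M = M.
Proof.
move=> MI; have hM := minimal_ri MI; apply: subR_antisym.
  rewrite hom_compE; apply: (span_mod_sub hM (minimal_sup MI)) => y [N [NI NM Ny]].
  exact: (iso_sub_of_quot_comm MI (minimal_ri NI) NM Ny).
exact: minimal_sub_hom_comp.
Qed.

Lemma cond_ii_of_quot_comm : cond_ii I.
Proof.
move=> M MI; split; first exact: endo_comm_of_quot_comm.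
by rewrite hom_comp_quot_comm //; apply: iso_refl.
Qed.
End Commutative.

Lemma minimal_lclosed_of_cond_ii M : cond_ii I -> minimal_over I M ->
  forall r u, M u -> M (r * u).
Proof.
move=> Hii MI r u Mu; have hM := minimal_ri MI.
have HM := iso_over_sub_minimal MI (hom_comp_ri M) (minimal_sub_hom_comp MI) (Hii M MI).2.
have [Iru|nIru] := lem (I (r * u)); first exact: (minimal_sup MI).
have nz : exists u, M u /\ ~ I (r * u) by exists u.
apply: HM; rewrite hom_compE; apply: (span_mod_of hIr); exists (ltranslate I r M); split.
- exact: ltranslate_minimal.
- exact: (iso_sym hIr hM (ltranslate_ri hI r hM) (ltranslate_iso hI MI nz)).
- by exists u; split=> //; apply: eqmod_refl.
Qed.

Section TwoSidedMinimal.
Variables (M : R -> Prop) (e : R).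
Hypotheses (MI : minimal_over I M) (M_lclosed : forall r u, M u -> M (r * u)).
Hypothesis eM : idem_gen M e.

Lemma idem_gen_central r : eqmod I (e * r) (r * e).
Proof.
have [hM IM _ _] := MI; have [Me nIe ee _] := eM.
have re : eqmod I (r * e) (e * r * e).
  by rewrite -mulrA; apply: (idem_gen_eqmod eM (M_lclosed r Me)).
suff er : eqmod I (e * r) (e * r * e) by apply: (eqmod_trans hIr er (eqmod_sym hIr re)).
apply: contrapT => nIz; set z := e * r - e * r * e in nIz.
have Mer : M (e * r) := ridealMr hM r Me.
have Mz : M z := ridealB hM Mer (ridealMr hM e Mer).
have [s es] := minimal_sub_of_mem MI (principal_ri z hIr) (principal_sup z)
  (principal_sub hM IM Mz) (principal_mem z hIr) nIz Me.
have ze : z * e = 0 by rewrite /z mulrBl -(mulrA (e * r) e e) ee subrr.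
(* [e = z s e] modulo [I] and [s e = e s e] modulo [I], while [z e = 0] *)
have := eqmodMr hIr e es; rewrite ee -mulrA => ezse.
have := eqmod_trans hIr ezse (eqmodMl hI z (idem_gen_eqmod eM (M_lclosed s Me))).
by rewrite mulrA ze mul0r subr0.
Qed.

Lemma commutator_mul_idem_gen x y : endo_comm I M -> I ((x * y - y * x) * e).
Proof.
move=> Mcomm; have [Me _ ee _] := eM.
have lmul a : hom_over I M M ( *%R a).
  split=> [u|u _|u v _ _|u s _]; first exact: M_lclosed.
  - exact: idealMl.
  - by rewrite mulrDr subrr; apply: rideal0.
  - by rewrite mulrA subrr; apply: rideal0.
have exe a : eqmod I (e * a * e) (a * e).
  by have := eqmodMr hIr e (idem_gen_central a); rewrite -(mulrA a) ee.
have XY a b : eqmod I (e * a * e * (e * b * e)) (a * b * e).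
  apply: (eqmod_trans hIr (eqmodM hI (exe a) (exe b))).
  have := eqmodMr hIr e (eqmodMl hI a (idem_gen_central b)).
  by rewrite !mulrA -(mulrA _ e e) ee.
have := Mcomm _ _ (lmul (e * x * e)) (lmul (e * y * e)) e Me.
rewrite /= -!(mulrA _ e e) ee => XYe; rewrite mulrBl.
exact: (eqmod_trans hIr (eqmod_sym hIr (XY x y)) (eqmod_trans hIr XYe (XY y x))).
Qed.
End TwoSidedMinimal.

Lemma quot_comm_of_cond_ii : semiartinian R -> socle_term I -> cond_ii I -> quot_comm I.
Proof.
move=> Rsa TI Hii x y; set c := x * y - y * x; apply: contrapT => nIc.
have [q [M [MI Mcq nIcq]]] := socle_essential Rsa TI nIc.
have Mlc := minimal_lclosed_of_cond_ii Hii MI.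
have [e eM] := minimal_idem_gen MI.
have cM u : M u -> I (c * u).
  move=> Mu; apply: (rideal_eqmod hIr (eqmodMl hI c (idem_gen_eqmod eM Mu))).
  rewrite mulrA; apply: (ridealMr hIr).
  exact: (commutator_mul_idem_gen MI Mlc eM x y (Hii M MI).1).
(* [c q = c (q w c q)] and [q w c q] lies in the two-sided [M] *)
have [w cqw] := R_reg (c * q); apply: nIcq; rewrite -cqw -!mulrA.
by apply/cM/Mlc/Mlc.
Qed.
End Regular.

(** * Quotient rings and condition (iii) *)

Local Open Scope quotient_scope.

Record proper_ideal (R : nzRingType) := ProperIdeal {
  pideal :> R -> Prop;
  pidealP : ideal pideal;
  pideal_proper : ~ pideal 1 }.

Section QuotientRing.
Variables (R : nzRingType) (P : proper_ideal R).
Let hP := pidealP P.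
Let hPr := hP.1.
Implicit Types x y z : R.

Definition eqmodb x y := `[< P (x - y) >].

Lemma eqmodb_equiv : equiv_class_of eqmodb.
Proof.
split=> [x|x y|y x z]; rewrite /eqmodb.
- exact/asboolP/(eqmod_refl hPr).
- by apply/asboolP/asboolP; apply: eqmod_sym.
- by move=> /asboolP xy /asboolP yz; apply/asboolP; apply: (eqmod_trans hPr xy yz).
Qed.

Canonical eqmodb_equiv_rel := EquivRelPack eqmodb_equiv.

Definition quot := {eq_quot eqmodb_equiv_rel}.
HB.instance Definition _ := Choice.on quot.
Definition qproj x : quot := \pi x.

Lemma qproj_eq x y : qproj x = qproj y <-> P (x - y).
Proof. by rewrite /qproj; split=> [/eqmodP/asboolP | /asboolP/(eqmodP eqmodb_equiv_rel x y)]. Qed.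

Lemma qprojK (a : quot) : qproj (repr a) = a.
Proof. exact: reprK. Qed.

Lemma qproj_ind (Q : quot -> Prop) : (forall x, Q (qproj x)) -> forall a, Q a.
Proof. by move=> Qx a; rewrite -(qprojK a). Qed.

Lemma repr_qproj x : P (repr (qproj x) - x).
Proof. exact/qproj_eq/qprojK. Qed.

Definition qopp (a : quot) := qproj (- repr a).
Definition qadd (a b : quot) := qproj (repr a + repr b).
Definition qmul (a b : quot) := qproj (repr a * repr b).

Lemma qoppE x : qopp (qproj x) = qproj (- x).
Proof. by apply/qproj_eq; rewrite -opprD; apply/(ridealN hPr)/repr_qproj. Qed.

Lemma qaddE x y : qadd (qproj x) (qproj y) = qproj (x + y).
Proof. by apply/qproj_eq; apply: (eqmodD hPr); apply: repr_qproj. Qed.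

Lemma qmulE x y : qmul (qproj x) (qproj y) = qproj (x * y).
Proof. by apply/qproj_eq; apply: (eqmodM hP); apply: repr_qproj. Qed.

Lemma qaddA : associative qadd.
Proof. by elim/qproj_ind=> x; elim/qproj_ind=> y; elim/qproj_ind=> z; rewrite !qaddE addrA. Qed.
Lemma qaddC : commutative qadd.
Proof. by elim/qproj_ind=> x; elim/qproj_ind=> y; rewrite !qaddE addrC. Qed.
Lemma qadd0 : left_id (qproj 0) qadd.
Proof. by elim/qproj_ind=> x; rewrite qaddE add0r. Qed.
Lemma qaddN : left_inverse (qproj 0) qopp qadd.
Proof. by elim/qproj_ind=> x; rewrite qoppE qaddE addNr. Qed.
HB.instance Definition _ := GRing.isZmodule.Build quot qaddA qaddC qadd0 qaddN.

Lemma qmulA : associative qmul.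
Proof. by elim/qproj_ind=> x; elim/qproj_ind=> y; elim/qproj_ind=> z; rewrite !qmulE mulrA. Qed.
Lemma qmul1 : left_id (qproj 1) qmul.
Proof. by elim/qproj_ind=> x; rewrite qmulE mul1r. Qed.
Lemma qmulr1 : right_id (qproj 1) qmul.
Proof. by elim/qproj_ind=> x; rewrite qmulE mulr1. Qed.
Lemma qmulDl : left_distributive qmul qadd.
Proof.
by elim/qproj_ind=> x; elim/qproj_ind=> y; elim/qproj_ind=> z; rewrite !(qaddE, qmulE) mulrDl.
Qed.
Lemma qmulDr : right_distributive qmul qadd.
Proof.
by elim/qproj_ind=> x; elim/qproj_ind=> y; elim/qproj_ind=> z; rewrite !(qaddE, qmulE) mulrDr.
Qed.
Lemma qone_neq0 : qproj 1 != qproj 0.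
Proof. by apply/eqP => /qproj_eq; rewrite subr0; apply: pideal_proper. Qed.
HB.instance Definition _ :=
  GRing.Zmodule_isNzRing.Build quot qmulA qmul1 qmulr1 qmulDl qmulDr qone_neq0.

Lemma qproj_zmod : zmod_morphism qproj.
Proof. by move=> x y; rewrite /= -qaddE -qoppE. Qed.
HB.instance Definition _ := GRing.isZmodMorphism.Build R quot qproj qproj_zmod.
Lemma qproj_monoid : monoid_morphism qproj.
Proof. by split=> // x y; rewrite /= -qmulE. Qed.
HB.instance Definition _ := GRing.isMonoidMorphism.Build R quot qproj qproj_monoid.

Lemma qproj_eq0 x : qproj x = 0 <-> P x.
Proof. by rewrite -(rmorph0 qproj) qproj_eq subr0. Qed.

Lemma repr_add (a b : quot) : P (repr (a + b) - (repr a + repr b)).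
Proof. exact: repr_qproj. Qed.
Lemma repr_mul (a b : quot) : P (repr (a * b) - repr a * repr b).
Proof. exact: repr_qproj. Qed.
Lemma repr_one : P (repr (1 : quot) - 1).
Proof. exact: repr_qproj. Qed.
End QuotientRing.

Section Components.
Variables (R : nzRingType) (I : R -> Prop).
Hypotheses (R_reg : vN_regular R) (hI : ideal I) (I_comm : quot_comm I).
Let hIr := hI.1.
Implicit Types (M N : R -> Prop) (u x y r : R).

Definition ann M x := forall u, M u -> I (u * x).

Lemma ann_ideal M : right_ideal M -> ideal (ann M).
Proof.
move=> hM; split; first split.
- by move=> u _; rewrite mulr0; apply: rideal0.
- by move=> x y Ax Ay u Mu; rewrite mulrBr; apply: (ridealB hIr (Ax u Mu) (Ay u Mu)).
- by move=> x r Ax u Mu; rewrite mulrA; apply: (ridealMr hIr r (Ax u Mu)).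
- by move=> r x Ax u Mu; rewrite mulrA; apply: (Ax (u * r) (ridealMr hM r Mu)).
Qed.

Lemma ann_proper M : minimal_over I M -> ~ ann M 1.
Proof. by move=> [_ _ [m [Mm nIm]] _] /(_ m Mm); rewrite mulr1. Qed.

Lemma ann_idem_gen M e x : idem_gen I M e -> ann M x <-> I (e * x).
Proof.
move=> eM; have [Me _ _ _] := eM; split=> [|Iex u Mu]; first by apply.
have ue := eqmod_trans hIr (idem_gen_eqmod hI eM Mu) (I_comm e u).
by apply: (rideal_eqmod hIr (eqmodMr hIr x ue)); rewrite -mulrA; apply: idealMl.
Qed.

(* When [R/I] is commutative, the homogeneous components of [Soc(R/I)] are the
   minimal right ideals over [I] themselves, and [comp_ring b = R / ann (comp b)]
   realizes [End(comp b / I)] through [comp_act b]. *)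
Definition comp_index := {M : R -> Prop | minimal_over I M}.
Implicit Types b : comp_index.

Definition comp b := sval b.
Lemma comp_minimal b : minimal_over I (comp b). Proof. exact: svalP. Qed.

Lemma comp_inj b b' : comp b = comp b' -> b = b'.
Proof. by case: b b' => [M MI] [M' M'I] /= EM; subst M'; congr exist. Qed.

Definition comp_ann b : proper_ideal R :=
  ProperIdeal (ann_ideal (minimal_ri (comp_minimal b))) (ann_proper (comp_minimal b)).
Definition comp_ring b : nzRingType := quot (comp_ann b).
Definition comp_proj b : {rmorphism R -> comp_ring b} := qproj (comp_ann b).
Definition comp_act b (a : comp_ring b) u := u * repr a.

Definition comp_gen b := sval (cid (minimal_idem_gen R_reg hI (comp_minimal b))).
Lemma comp_genP b : idem_gen I (comp b) (comp_gen b).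
Proof. exact: svalP (cid _). Qed.

Lemma comp_projK b (a : comp_ring b) : comp_proj b (repr a) = a.
Proof. exact: qprojK. Qed.

Lemma comp_proj_eq0 b x : comp_proj b x = 0 <-> ann (comp b) x.
Proof. exact: (qproj_eq0 (comp_ann b)). Qed.

Lemma comp_proj_eq b x y : comp_proj b x = comp_proj b y <-> I (comp_gen b * (x - y)).
Proof. rewrite -(ann_idem_gen (x - y) (comp_genP b)); exact: (qproj_eq (comp_ann b)). Qed.

Lemma comp_components : components_index I comp.
Proof.
split=> [b|N NI|b b' bb']; first exact: comp_minimal.
  by exists (exist _ N NI); apply: iso_refl.
apply: comp_inj; apply: (minimal_sub_eq (comp_minimal b') (comp_minimal b)).
exact: (iso_sub_of_quot_comm R_reg hI I_comm (comp_minimal b') (minimal_ri (comp_minimal b)) bb').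
Qed.

Lemma comp_ring_comm b (u v : comp_ring b) : u * v = v * u.
Proof.
elim/qproj_ind: u => x; elim/qproj_ind: v => y.
rewrite -!(rmorphM (comp_proj b)); apply/(qproj_eq (comp_ann b)) => w _.
exact: idealMl.
Qed.

Lemma comp_act_hom b : endo_ring_hom I (comp b) (@comp_act b).
Proof.
have hM := minimal_ri (comp_minimal b); rewrite /comp_act.
split=> [a|a a' x Mx|a a' x Mx|x Mx].
- split=> [x Mx|x _ Ix|x y _ _|x r _]; first exact: ridealMr.
  + exact: ridealMr.
  + by rewrite mulrDl subrr; apply: rideal0.
  + by rewrite -!mulrA -mulrBr; apply: idealMl.
- by rewrite -mulrDr -mulrBr; apply: (repr_add a a' x Mx).
- rewrite -mulrA; apply: (eqmod_trans hIr _ (eqmodMl hI x (I_comm _ _))).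
  by rewrite -mulrBr; apply: (repr_mul a a' x Mx).
- by rewrite -{2}[x]mulr1 -mulrBr; apply: (repr_one (comp_ann b) x Mx).
Qed.

Lemma comp_act_iso b : endo_ring_iso I (comp b) (@comp_act b).
Proof.
have MI := comp_minimal b; have hM := minimal_ri MI.
have eM := comp_genP b; have [Me _ ee Mgen] := eM; set e := comp_gen b in eM Me ee Mgen.
split=> [|a a' aa'|f hf]; first exact: comp_act_hom.
  rewrite -(qprojK a) -(qprojK a'); apply/(qproj_eq (comp_ann b)) => x Mx.
  by rewrite mulrBr; apply: aa'.
exists (comp_proj b (f e)) => x Mx; rewrite /comp_act.
apply: (eqmod_trans hIr (_ : eqmod I _ (x * f e))).
  by rewrite -mulrBr; apply: (repr_qproj (comp_ann b) (f e) x Mx).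
have [t xt] := Mgen x Mx.
have fee : eqmod I (f e * e) (f e) by have := hom_eqmodMr e hf Me; rewrite ee; apply: eqmod_sym.
apply: (eqmod_trans hIr (I_comm x (f e))); apply: (eqmod_trans hIr (eqmodMl hI (f e) xt)).
rewrite mulrA; apply: (eqmod_trans hIr (eqmodMr hIr t fee)).
exact: (eqmod_sym hIr (hom_eqmod_idem hI hM eM hf Mx xt)).
Qed.

Lemma comp_proj_kernel x : semiartinian R -> socle_term I ->
  I x <-> forall b, comp_proj b x = 0.
Proof.
move=> Rsa TI; split=> [Ix b|x0]; first by apply/comp_proj_eq0 => u _; apply: idealMl.
apply: contrapT => nIx; have [q [M [MI Mxq nIxq]]] := socle_essential Rsa TI nIx.
have /comp_proj_eq0 /(_ _ Mxq) Ixqx := x0 (exist _ M MI).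
have [w xqw] := R_reg (x * q); apply: nIxq; rewrite -xqw.
(* [(x q w) (x q) = (x q) (x q w)] modulo [I], and [x q x] lies in [I] *)
apply: (rideal_eqmod hIr (I_comm _ _)).
by rewrite !mulrA; apply: (ridealMr hIr); apply: (ridealMr hIr).
Qed.

Lemma comp_proj_gen b r : comp_proj b (comp_gen b * r) = comp_proj b r.
Proof.
have [_ _ ee _] := comp_genP b.
by apply/comp_proj_eq; rewrite mulrBr mulrA ee subrr; apply: rideal0.
Qed.

Lemma comp_proj_gen_other b b' r : b' <> b -> comp_proj b' (comp_gen b * r) = 0.
Proof.
move=> b'b; have [Me _ _ _] := comp_genP b; have [Me' _ _ _] := comp_genP b'.
have hM := minimal_ri (comp_minimal b); have hM' := minimal_ri (comp_minimal b').
apply/comp_proj_eq; rewrite subr0 mulrA; apply: (ridealMr hIr).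
(* [e' e] lies in both components, up to [I] *)
apply: contrapT => nIe'e; apply/b'b/comp_inj.
apply: (minimal_meet_eq (comp_minimal b') (comp_minimal b) _ _ nIe'e).
  exact: ridealMr.
exact: (eqmod_mem hM (minimal_sup (comp_minimal b)) (I_comm _ _) (ridealMr hM _ Me)).
Qed.

Notation PT := (forall b, comp_ring b).
Implicit Types z w : PT.

Definition proj_image z := exists x, forall b, z b = comp_proj b x.

Lemma proj_image0 : proj_image (pzero comp_ring).
Proof. by exists 0 => b; rewrite rmorph0. Qed.

Lemma proj_imageB z w : proj_image z -> proj_image w -> proj_image (psub z w).
Proof. by move=> [x zx] [y wy]; exists (x - y) => b; rewrite /psub zx wy rmorphB. Qed.

Lemma proj_imageM z w : proj_image z -> proj_image w -> proj_image (pmul z w).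
Proof. by move=> [x zx] [y wy]; exists (x * y) => b; rewrite /pmul zx wy rmorphM. Qed.

Lemma proj_image_right_ideal : prod_right_ideal proj_image proj_image.
Proof. by split=> //; [apply: proj_image0 | apply: proj_imageB | apply: proj_imageM]. Qed.

Definition vanish_outside b z := forall b', b' <> b -> z b' = 0.

Lemma prod_right_ideal_vanish (V : PT -> Prop) b : prod_right_ideal proj_image V ->
  prod_right_ideal proj_image (fun z => V z /\ vanish_outside b z).
Proof.
move=> [VI V0 VB VM]; split=> [z [/VI //]|||].
- by split=> //; apply: V0.
- move=> z w [Vz z0] [Vw w0]; split=> [|b' b'b]; first exact: VB.
  by rewrite /psub z0 // w0 // subrr.
- move=> z w [Vz z0] Iw; split=> [|b' b'b]; first exact: VM.
  by rewrite /pmul z0 // mul0r.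
Qed.

Definition supported_at b z := proj_image z /\ vanish_outside b z.

Definition gen_vec b r : PT := fun b0 => comp_proj b0 (comp_gen b * r).

Lemma gen_vec_supported b r : supported_at b (gen_vec b r).
Proof. by split=> [|b' b'b]; [exists (comp_gen b * r) | apply: comp_proj_gen_other]. Qed.

Lemma gen_vec_nonzero b : gen_vec b 1 b <> 0.
Proof. by rewrite /gen_vec comp_proj_gen rmorph1; apply/eqP/oner_neq0. Qed.

(* For [w = \pi x_w] nonzero and supported at [b], [e_b] lies in [e_b x_w R + I];
   this writes any [z] supported at [b] as [w * r]. *)
Lemma supported_at_minimal b : prod_minimal proj_image (supported_at b).
Proof.
have MI := comp_minimal b; have [hM IM _ _] := MI.
have [Me nIe ee _] := comp_genP b; set e := comp_gen b in Me nIe ee.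
split; first exact: (prod_right_ideal_vanish b proj_image_right_ideal).
  by exists (gen_vec b 1); split; [apply: gen_vec_supported | exists b; apply: gen_vec_nonzero].
move=> V [_ _ _ VM] Vb [w [Vw [b1 wb1]]] z [[xz zxz] z0].
have [[xw wxw] w0] := Vb _ Vw.
have b1b : b1 = b by apply: contrapT => b1b; apply/wb1/w0.
subst b1; have nIexw : ~ I (e * xw).
  move=> Iexw; apply: wb1; rewrite wxw -(rmorph0 (comp_proj b)).
  by apply/comp_proj_eq; rewrite subr0.
have [y ey] : principal I (e * xw) e.
  apply: (minimal_sub_of_mem MI (principal_ri _ hIr) (principal_sup _) _ (principal_mem _ hIr)
    nIexw Me).
  exact: (principal_sub hM IM (ridealMr hM _ Me)).
pose r : PT := fun b0 => comp_proj b0 (y * e * xz).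
suff -> : z = pmul w r by apply: VM => //; exists (y * e * xz).
apply: functional_extensionality_dep => b0; rewrite /pmul.
have [->|b0b] := pselect (b0 = b); last by rewrite z0 // w0 // mul0r.
rewrite zxz wxw /r -rmorphM; apply/comp_proj_eq; rewrite mulrBr !mulrA.
by have := eqmodMr hIr (e * xz) (eqmod_sym hIr ey); rewrite !mulrA ee; apply: eqmod_sym.
Qed.

Lemma prod_minimal_vanish (V : PT -> Prop) : prod_minimal proj_image V ->
  exists b, forall z, V z -> vanish_outside b z.
Proof.
move=> [hV [w [Vw [b wb]]] Vmin]; exists b.
pose V' z := V z /\ vanish_outside b z.
have nzV' : prod_nonzero V'.
  have [_ _ _ VM] := hV; exists (pmul w (gen_vec b 1)); split.
    split=> [|b' b'b]; first by apply: VM => //; have [] := gen_vec_supported b 1.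
    by rewrite /pmul; have [_ ->] := gen_vec_supported b 1; rewrite ?mulr0.
  by exists b; rewrite /pmul /gen_vec comp_proj_gen rmorph1 mulr1.
move=> z Vz; have V'V : forall v, V' v -> V v by move=> v [].
by have [] := Vmin V' (prod_right_ideal_vanish b hV) V'V nzV' z Vz.
Qed.

Lemma fin_supp_prod_soc z : fin_supp z -> prod_soc proj_image z.
Proof.
move=> [t]; elim: t z => [|b t IH] z zt.
  by exists [::]; split=> // b0; rewrite /psum big_nil; apply: zt.
pose zb : PT := fun b0 => if pselect (b0 = b) then 0 else z b0.
pose u : PT := fun b0 => if pselect (b0 = b) then z b0 else 0.
have [|s [Ns zbs]] := IH zb.
  move=> b0 b0t; rewrite /zb; case: pselect => // b0b; apply: zt => /= [[b0b'|//]].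
  exact/b0b/esym.
exists (u :: s); split=> [v /= [<-|/Ns //]|b0].
  exists (supported_at b); split; first exact: supported_at_minimal.
  split=> [|b' b'b]; last by rewrite /u; case: pselect.
  exists (comp_gen b * repr (z b)) => b0; rewrite /u.
  case: pselect => [b0b|b0b]; last by rewrite comp_proj_gen_other.
  by subst b0; rewrite comp_proj_gen comp_projK.
rewrite /psum big_cons; have := zbs b0; rewrite /psum => <-.
by rewrite /u /zb; case: (pselect (b0 = b)) => ?; rewrite ?addr0 ?add0r.
Qed.

Lemma prod_soc_fin_supp z : prod_soc proj_image z -> fin_supp z.
Proof.
move=> [s [Ns zs]]; suff [t st] : fin_supp (psum s).
  by exists t => b bt; rewrite zs; apply: st.
elim: s Ns {zs} => [|u s IH] Ns; first by exists nil => b _; rewrite /psum big_nil.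
have [t st] := IH (fun v sv => Ns v (or_intror sv)).
have [V [VI Vu]] := Ns u (or_introl erefl).
have [bu ubu] := prod_minimal_vanish VI.
exists (bu :: t) => b /= /not_orP[bub bt].
rewrite /psum big_cons ubu //; last by move=> bbu; apply/bub/esym.
by rewrite add0r; apply: st.
Qed.
End Components.

Lemma cond_iii_of_quot_comm (R : nzRingType) (I : R -> Prop) : vN_regular R ->
  semiartinian R -> socle_term I -> quot_comm I -> cond_iii I.
Proof.
move=> R_reg Rsa TI I_comm; have hI := socle_term_ideal TI.
exists (comp_index I), (comp_ring hI), (@comp _ I), (comp_act (hI := hI)), (comp_proj hI).
split=> [||b|x|z].
- exact: comp_components.
- exact: comp_act_iso.
- exact: comp_ring_comm.
- exact: comp_proj_kernel.
- by split; [apply: prod_soc_fin_supp | apply: fin_supp_prod_soc].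
Qed.

Lemma quot_comm_of_cond_iii (R : nzRingType) (I : R -> Prop) : cond_iii I -> quot_comm I.
Proof.
move=> [Idx [K [c [psi [phi [_ _ K_comm I_ker _]]]]]] x y.
by apply/I_ker => b; rewrite rmorphB !rmorphM K_comm subrr.
Qed.

(* [Hpf] only serves the matrix description of the layers, which the intrinsic
   conditions (ii) and (iii) bypass. *)
Theorem lemma3p5 (R : nzRingType) (Hreg : vN_regular R) (Hsa : semiartinian R)
  (Hpf : prim_factors_artinian R) (I : R -> Prop) (HI : socle_term I)
  (Hle : exists x, ~ I x) :
  (quot_comm I <-> cond_ii I) /\ (cond_ii I <-> cond_iii I).
Proof.
have hI := socle_term_ideal HI.
have i_ii := cond_ii_of_quot_comm Hreg hI.
have ii_i := quot_comm_of_cond_ii Hreg hI Hsa HI.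
have i_iii := cond_iii_of_quot_comm Hreg Hsa HI.
have iii_i := @quot_comm_of_cond_iii R I.
split; split=> // [Hii|Hiii].
- exact/i_iii/ii_i.
- exact/i_ii/iii_i.
Qed.
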